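(* Let $\mathbf m\in\mathbb C^d$ with $\operatorname{supp}(\mathbf m)\subseteq[\delta]_0$, where $2\delta-1\le d$, so that $\mathbf m=(a_0e^{i\theta_0},\dots,a_{\delta-1}e^{i\theta_{\delta-1}},0,\dots,0)^T$ with $a_j,\theta_j\in\mathbb R$. Let $1\le\gamma\le2\delta-1$ and $$\mu_2=\min_{|p|\le\gamma-1,\ |q|\le\delta-1}\left|\left(F_d(\widehat{\mathbf m}\circ S_p\overline{\widehat{\mathbf m}})\right)_q\right|.$$ If $|a_0|>(\delta-1)|a_1|$ and $|a_1|\ge|a_2|\ge\cdots\ge|a_{\delta-1}|>0$, then $\mu_2>0$.
   Context: Vectors in $\mathbb C^d$ are indexed by $[d]_0=\{0,1,\dots,d-1\}$, with all indices interpreted modulo $d$. $F_d$ is the DFT matrix $(F_d)_{j,k}=e^{-2\pi i jk/d}$ and $\widehat{\mathbf m}=F_d\mathbf m$. The shift is $(S_p\mathbf x)_n=x_{n+p}$; $\circ$ is the entrywise product and $\overline{\mathbf x}$ the entrywise conjugate; $\operatorname{supp}(\mathbf x)=\{n:x_n\neq0\}$. *)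

From HB Require Import structures.
From mathcomp Require Import all_boot all_order all_algebra all_field.
Set Implicit Arguments. Unset Strict Implicit. Unset Printing Implicit Defensive.
Import Order.TTheory GRing.Theory Num.Theory.
Local Open Scope ring_scope.

Definition vec (d : nat) := 'I_d -> algC.

Definition vget (d : nat) (x : vec d) (k : int) : algC :=
  match @insub nat (fun n => n < d)%N _ (absz (k %% d%:Z)%Z) with
  | Some i => x i
  | None => 0
  end.

(* omega d = e^{-2 pi i / d}: d.-root (-1) is e^{i pi / d} (minimal argument) *)
Definition omega (d : nat) : algC := ((d.-root (-1)) ^+ 2)^-1.

Definition dft (d : nat) (x : vec d) : vec d :=
  fun j => \sum_(k < d) omega d ^+ (j * k) * x k.

Definition shift (d : nat) (p : int) (x : vec d) : vec d :=
  fun n => vget x (n%:Z + p).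

Definition conjv (d : nat) (x : vec d) : vec d := fun n => (x n)^*.

Definition hadamard (d : nat) (x y : vec d) : vec d := fun n => x n * y n.

(* the integers -(n-1), ..., n-1 *)
Definition zrange (n : nat) : seq int :=
  [seq (k%:Z - (n.-1)%:Z) | k <- iota 0 (n.-1).*2.+1].

Definition mu2_term (d : nat) (m : vec d) (p q : int) : algC :=
  `| vget (dft (hadamard (dft m) (shift p (conjv (dft m))))) q |.

(* mu_2 = min over |p| <= gamma-1, |q| <= delta-1 of the terms
   (the seed value mu2_term m 0 0 is itself one of the terms) *)
Definition mu2 (d delta gamma : nat) (m : vec d) : algC :=
  \big[Num.min/mu2_term m 0 0]_(p <- zrange gamma)
    \big[Num.min/mu2_term m 0 0]_(q <- zrange delta) mu2_term m p q.

(* Write m^ = F_d m and w = omega d.  Expanding both DFTs, the entry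
   (F_d (m^ o S_p conj m^))_q equals d times the twisted autocorrelation
       sum_k m_k conj(m_(k+q)) w^(-p(k+q))
   because the outer sum over frequencies collapses by orthogonality of the
   powers of w.  For this we first prove that the twiddle factor
   w = (d.-root (-1))^-2 is a primitive d-th root of unity: if a proper power
   of y = d.-root (-1) were already -1, a suitable s-th root of y (chosen via
   Parseval's identity for geometric sums) would be a d-th root of -1 with
   larger real part, contradicting the choice of the principal root.
   Then, for every lag q in [-(delta-1), delta-1], one term of the
   autocorrelation (of size |a_0| |a_|q||) dominates the delta - 1 others
   (each at most |a_1| |a_|q||), since |a_0| > (delta - 1) |a_1| and the
   amplitudes decrease along the support; hence no term of the minimum
   defining mu_2 vanishes. *)

From HB Require Import structures.
From mathcomp Require Import all_boot all_order all_algebra all_field.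
From mathcomp Require Import zify ring.
Import Order.TTheory GRing.Theory Num.Theory.
Set Implicit Arguments. Unset Strict Implicit. Unset Printing Implicit Defensive.
Local Open Scope ring_scope.

Section RootsOfUnity.

Variables (n : nat) (z : algC).
Hypotheses (n_gt0 : (0 < n)%N) (zn1 : z ^+ n = 1).

Lemma unity_norm : `|z| = 1.
Proof.
by apply/eqP; rewrite -(pexpr_eq1 n_gt0 (normr_ge0 z)) -normrX zn1 normr1.
Qed.

Lemma unity_inv : z^-1 = z ^+ n.-1.
Proof.
have z_neq0 : z != 0 by rewrite -normr_eq0 unity_norm oner_eq0.
by apply: (mulfI z_neq0); rewrite mulfV // -exprS prednK.
Qed.

Lemma unity_conj : z^* = z ^+ n.-1.
Proof. by rewrite -unity_inv invC_norm unity_norm expr1n invr1 mul1r. Qed.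

End RootsOfUnity.

Lemma prim_sum_expr (n e : nat) (z : algC) : n.-primitive_root z ->
  \sum_(j < n) z ^+ (j * e) = if (n %| e)%N then n%:R else 0.
Proof.
move=> prim_z; rewrite (prim_order_dvd prim_z).
under eq_bigr => j _ do rewrite mulnC exprM.
have [->|ze_neq1] := eqVneq (z ^+ e) 1.
  by under eq_bigr => j _ do rewrite expr1n; rewrite sumr_const card_ord.
have : (z ^+ e - 1) * \sum_(j < n) (z ^+ e) ^+ j = 0.
  by rewrite -subrX1 -exprM mulnC exprM (prim_expr_order prim_z) expr1n subrr.
by move/eqP; rewrite mulf_eq0 subr_eq0 (negPf ze_neq1) => /eqP.
Qed.

(* For a, b < s, the number a + (s-1) b is congruent to a - b modulo s. *)
Lemma dvdn_add_predM (s a b : nat) : (a < s)%N -> (b < s)%N ->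
  (s %| a + s.-1 * b)%N = (a == b).
Proof.
case: s => // s a_lt b_lt /=; apply/idP/eqP => [/dvdnP [k ek]|->]; last first.
  have -> : (b + s * b = b * s.+1)%N by lia.
  exact: dvdn_mull.
have : ((a + s.+1 * b) %% s.+1 = (k * s.+1 + b) %% s.+1)%N.
  by congr (_ %% _)%N; lia.
by rewrite modnMDl addnC mulnC modnMDl !modn_small.
Qed.

Lemma geometric_parseval (s : nat) (r eta : algC) : `|r| = 1 ->
  s.-primitive_root eta ->
  \sum_(j < s) `|\sum_(a < s) (r * eta ^+ j) ^+ a| ^+ 2 = (s * s)%:R.
Proof.
move=> r_norm prim_eta; have s_gt0 := prim_order_gt0 prim_eta.
have r_neq0 : r != 0 by rewrite -normr_eq0 r_norm oner_eq0.
have eta_conj := unity_conj s_gt0 (prim_expr_order prim_eta).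
have r_conj : r^* = r^-1 by rewrite invC_norm r_norm expr1n invr1 mul1r.
have cross (j a b : nat) : (r * eta ^+ j) ^+ a * ((r * eta ^+ j) ^+ b)^* =
    (r ^+ a * r ^- b) * eta ^+ (j * (a + s.-1 * b)).
  rewrite rmorphXn rmorphM rmorphXn /= r_conj eta_conj !exprMn exprVn -!exprM.
  by rewrite mulnDr exprD mulrACA; congr (_ * (_ * _)); congr (_ ^+ _); lia.
have expand (j : 'I_s) : `|\sum_(a < s) (r * eta ^+ j) ^+ a| ^+ 2 =
    \sum_(a < s) \sum_(b < s) (r ^+ a * r ^- b) * eta ^+ (j * (a + s.-1 * b)).
  rewrite normCK rmorph_sum mulr_suml; apply: eq_bigr => a _.
  by rewrite mulr_sumr; apply: eq_bigr => b _; rewrite cross.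
rewrite (eq_bigr _ (fun j _ => expand j)) exchange_big /=.
under eq_bigr => a _ do rewrite exchange_big /=.
have -> : (s * s)%:R = \sum_(a < s) (s%:R : algC).
  by rewrite sumr_const card_ord natrM mulr_natr.
apply: eq_bigr => a _.
under eq_bigr => b _ do rewrite -mulr_sumr prim_sum_expr // dvdn_add_predM //.
rewrite (bigD1 a) //= eqxx mulfV ?expf_neq0 // mul1r big1 ?addr0 // => b b_neq_a.
by move: b_neq_a; rewrite eq_sym -val_eqE => /negPf ->; rewrite mulr0.
Qed.

Lemma neg1_neq1 : (-1 : algC) != 1.
Proof. by rewrite lt_eqF // (lt_trans (ltrN10 _)). Qed.

Lemma unit_dist1 (z : algC) : `|z| = 1 -> `|z - 1| ^+ 2 = 2 - 2 * 'Re z.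
Proof.
move=> z_norm; have zz : z * z^* = 1 by rewrite -normCK z_norm expr1n.
have Re2 : 2 * 'Re z = z + z^* by rewrite ReE mulrC divfK // pnatr_eq0.
rewrite normCK rmorphB rmorph1 Re2.
by transitivity (z * z^* - z - z^* + 1); [ring | rewrite zz; ring].
Qed.

(* Among the s-th roots w of z we pick one where
   G(w) = 1 + w + ... + w^(s-1) is large (Parseval); then (w - 1) G(w) = z - 1
   forces w to be closer to 1 than z is. *)
Lemma closer_root (s : nat) (z : algC) : (1 < s)%N -> `|z| = 1 -> z != 1 ->
  exists w, w ^+ s = z /\ 'Re z < 'Re w.
Proof.
move=> s_gt1 z_norm z_neq1; have s_gt0 : (0 < s)%N by lia.
set r := s.-root z; have rs : r ^+ s = z := rootCK s_gt0 z.
have r_norm : `|r| = 1.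
  by apply/eqP; rewrite -(pexpr_eq1 s_gt0 (normr_ge0 r)) -normrX rs z_norm.
have [eta prim_eta] := C_prim_root_exists s_gt0.
pose G (x : algC) := \sum_(a < s) x ^+ a.
have [j G_large] : exists j : 'I_s, s%:R <= `|G (r * eta ^+ j)| ^+ 2.
  apply/existsP; apply: contraT => /existsPn G_small.
  have : \sum_(j < s) `|G (r * eta ^+ j)| ^+ 2 < \sum_(j < s) (s%:R : algC).
    apply: ltr_sum => [|j _]; first by apply/hasP; exists (Ordinal s_gt0).
    by rewrite real_ltNge ?realn ?rpredX ?normr_real ?G_small.
  by rewrite geometric_parseval // sumr_const card_ord natrM mulr_natr ltxx.
set w := r * eta ^+ j in G_large.
have eta_unit := prim_expr_order prim_eta.
have ws : w ^+ s = z.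
  by rewrite /w exprMn rs -exprM mulnC exprM eta_unit expr1n mulr1.
have w_norm : `|w| = 1.
  by rewrite /w normrM r_norm normrX (unity_norm s_gt0 eta_unit) expr1n mulr1.
exists w; split=> //.
have factor : `|w - 1| ^+ 2 * `|G w| ^+ 2 = `|z - 1| ^+ 2.
  by rewrite -exprMn -normrM /G -subrX1 ws.
have z_dist_gt0 : 0 < `|z - 1| ^+ 2 by rewrite exprn_gt0 // normr_gt0 subr_eq0.
have closer : `|w - 1| ^+ 2 < `|z - 1| ^+ 2.
  have [->|w_dist_neq0] := eqVneq (`|w - 1| ^+ 2) 0; first exact: z_dist_gt0.
  have w_dist_gt0 : 0 < `|w - 1| ^+ 2 by rewrite lt0r w_dist_neq0 exprn_ge0.
  rewrite -factor ltr_pMr //; apply: lt_le_trans G_large; rewrite ltr1n //.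
by rewrite (unit_dist1 w_norm) (unit_dist1 z_norm) ltrD2l ltrN2 ltr_pM2l in closer.
Qed.

(* The principal root d.-root (-1) maximizes the real part among the d-th roots
   of -1 in the upper half plane; hence no proper power of it equals -1. *)
Lemma rootC_neg1_expr_neq (d k : nat) : (0 < k)%N -> (k < d)%N -> (k %| d)%N ->
  (d.-root (-1 : algC)) ^+ k != -1.
Proof.
move=> k_gt0 k_lt_d k_dvd_d; apply/eqP => yk; set y := d.-root (-1) in yk.
have d_gt0 : (0 < d)%N by lia.
have yd : y ^+ d = -1 := rootCK d_gt0 (-1).
have y_norm : `|y| = 1.
  by apply: (@unity_norm (d * 2)); rewrite ?muln_gt0 ?d_gt0 // exprM yd sqrrN expr1n.
have y_neq1 : y != 1.
  by apply/eqP => y1; move/eqP: yd; rewrite y1 expr1n eq_sym (negPf neg1_neq1).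
have [s ds] := dvdnP k_dvd_d.
have s_gt1 : (1 < s)%N.
  by move: k_lt_d; rewrite ds; case: s {ds} => [|[|]] //; rewrite mul1n ltnn.
have [w [ws Re_lt]] := closer_root s_gt1 y_norm y_neq1.
have wd : w ^+ d = -1 by rewrite ds exprM ws.
have [Im_ge0|Im_lt0] := boolP (0 <= 'Im w).
  by move: (rootC_Re_max d_gt0 wd Im_ge0) => /(lt_le_trans Re_lt); rewrite ltxx.
have wd' : w^* ^+ d = -1 by rewrite -rmorphXn wd rmorphN1.
have Im_conj_ge0 : 0 <= 'Im w^*.
  by rewrite Im_conj oppr_ge0 ltW // real_ltNge ?Creal_Im ?real0.
move: (rootC_Re_max d_gt0 wd' Im_conj_ge0).
by rewrite Re_conj => /(lt_le_trans Re_lt); rewrite ltxx.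
Qed.

(* The twiddle factor omega d = e^{-2 pi i / d} is a primitive d-th root of
   unity: the order k of y^2, y = d.-root (-1), divides d and satisfies
   y^k = -1, so k = d by the previous lemma. *)
Lemma omega_prim (d : nat) : (0 < d)%N -> d.-primitive_root (omega d).
Proof.
move=> d_gt0; set y := d.-root (-1 : algC).
have yd : y ^+ d = -1 := rootCK d_gt0 (-1).
have y2d : (y ^+ 2) ^+ d = 1 by rewrite -exprM mulnC exprM yd sqrrN expr1n.
have [k prim_y2 k_dvd_d] := prim_order_exists d_gt0 y2d.
have k_gt0 := prim_order_gt0 prim_y2.
have yk : y ^+ k = -1.
  have : (y ^+ k) ^+ 2 == 1 by rewrite -exprM mulnC exprM (prim_expr_order prim_y2).
  rewrite sqrf_eq1 => /orP [/eqP yk1|/eqP //].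
  move: yd; rewrite -(divnK k_dvd_d) mulnC exprM yk1 expr1n => /eqP.
  by rewrite eq_sym (negPf neg1_neq1).
have k_eq_d : k = d.
  apply/eqP; rewrite eqn_leq dvdn_leq //=; rewrite leqNgt; apply/negP => k_lt_d.
  by move: (rootC_neg1_expr_neq k_gt0 k_lt_d k_dvd_d); rewrite -/y yk eqxx.
rewrite k_eq_d in prim_y2.
rewrite /omega -/y (unity_inv d_gt0 y2d) prim_root_exp_coprime //.
by case: (d) d_gt0 => // n _; exact: coprimenS.
Qed.

Section DFT.

Variables (d : nat) (d_gt0 : (0 < d)%N).

Definition ordmod (n : nat) : 'I_d := Ordinal (ltn_pmod n d_gt0).

Definition zmodn (z : int) : nat := absz (z %% d)%Z.

Lemma zmodnE (z : int) : (z %% d)%Z = (zmodn z)%:Z.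
Proof. by rewrite gez0_abs // modz_ge0 // eqz_nat -lt0n. Qed.

Lemma zmodn_lt (z : int) : (zmodn z < d)%N.
Proof. by rewrite -ltz_nat -zmodnE ltz_pmod. Qed.

Lemma vgetE (x : vec d) (k : int) (i : 'I_d) : (k %% d)%Z = i -> vget x k = x i.
Proof.
rewrite /vget => ->; case: insubP => [j _ val_j|]; first by congr x; apply: val_inj.
by rewrite /= ltn_ord.
Qed.

Lemma vget_nat (x : vec d) (n : nat) : vget x n%:Z = x (ordmod n).
Proof. by apply: vgetE; rewrite modz_nat. Qed.

(* For l < d, d divides X - l (written X + (d-1) l) iff l is the residue of X. *)
Lemma dvdn_add_predM_mod (X l : nat) : (l < d)%N ->
  (d %| X + d.-1 * l)%N = (l == (X %% d)%N).
Proof.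
by move=> l_lt; rewrite /dvdn -modnDml -/(dvdn d _) dvdn_add_predM ?ltn_pmod // eq_sym.
Qed.

(* The twisted autocorrelation of m at lag Q, with modulation P:
   sum_k m_k conj(m_(k+Q)) omega^(-P (k+Q)). *)
Definition autocorr (m : vec d) (P Q : nat) : algC :=
  \sum_(k < d) m k * (m (ordmod (Q + k)))^* *
     omega d ^+ (d.-1 * P * ((Q + k) %% d)).

(* The quantity F_d (m^ o S_p conj(m^)) is d times a twisted autocorrelation
   of m: expanding both DFTs, the sum over the outer frequency collapses by
   orthogonality of the characters. *)
Lemma dft_autocorr (m : vec d) (p q : int) :
  vget (dft (hadamard (dft m) (shift p (conjv (dft m))))) q =
  d%:R * autocorr m (zmodn p) (zmodn q).
Proof.
set w := omega d; have prim_w := omega_prim d_gt0.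
have w_conj : w^* = w ^+ d.-1 := unity_conj d_gt0 (prim_expr_order prim_w).
set P := zmodn p; set Q := zmodn q.
have conj_dft (n : 'I_d) : vget (conjv (dft m)) (n%:Z + p) =
    (\sum_(l < d) w ^+ ((n + P) * l) * m l)^*.
  rewrite (@vgetE _ _ (ordmod (n + P))) /conjv /dft; last first.
    by rewrite /= -modz_nat PoszD /P -zmodnE modzDmr.
  congr (_^*); apply: eq_bigr => l _ /=.
  by rewrite -/w exprM (prim_expr_mod prim_w) -exprM.
rewrite (@vgetE _ _ (Ordinal (zmodn_lt q))) ?zmodnE //.
transitivity (\sum_(n < d) \sum_(k < d) \sum_(l < d)
   (m k * (m l)^* * w ^+ (d.-1 * P * l)) * w ^+ (n * (Q + k + d.-1 * l))).
  rewrite /dft /hadamard /shift /=; apply: eq_bigr => n _; rewrite conj_dft.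
  rewrite rmorph_sum /= mulr_suml mulr_sumr; apply: eq_bigr => k _.
  rewrite mulr_sumr mulr_sumr; apply: eq_bigr => l _.
  rewrite rmorphM rmorphXn /= w_conj -exprM.
  have exponent : (Q * n + n * k + d.-1 * ((n + P) * l) =
            d.-1 * P * l + n * (Q + k + d.-1 * l))%N by nia.
  transitivity (m k * (m l)^* *
    (w ^+ (Q * n) * w ^+ (n * k) * w ^+ (d.-1 * ((n + P) * l)))).
    by rewrite -/w; ring.
  by rewrite -!exprD exponent exprD mulrA.
(* Summing over n first leaves only l = Q + k (mod d). *)
rewrite exchange_big /=; under eq_bigr => k _ do rewrite exchange_big /=.
under eq_bigr => k _ do under eq_bigr => l _ do rewrite -mulr_sumr prim_sum_expr //.
rewrite /autocorr mulr_sumr; apply: eq_bigr => k _.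
rewrite (bigD1 (ordmod (Q + k))) //= big1 => [|l l_neq]; last first.
  rewrite dvdn_add_predM_mod //.
  have -> : (l == ((Q + k) %% d)%N :> nat) = false.
    by apply/negbTE; apply: contra l_neq => /eqP l_eq; apply/eqP/val_inj.
  by rewrite mulr0.
by rewrite dvdn_add_predM_mod ?ltn_pmod // eqxx addr0 mulrC.
Qed.

End DFT.

Lemma sum_neq0_dominant (I : finType) (x b : I -> algC) (i0 : I) :
  (forall i, i != i0 -> `|x i| <= b i) -> \sum_(i | i != i0) b i < `|x i0| ->
  \sum_i x i != 0.
Proof.
move=> x_le_b dom; rewrite (bigD1 i0) //= addr_eq0; apply/eqP => x_i0.
have : `|x i0| <= \sum_(i | i != i0) b i.
  by rewrite x_i0 normrN (le_trans (ler_norm_sum _ _ _)) // ler_sum.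
by move/(lt_le_trans dom); rewrite ltxx.
Qed.

Lemma sum_below_except (d dl : nat) (B : algC) (k0 : 'I_d) :
  (dl <= d)%N -> (k0 < dl)%N ->
  \sum_(k < d | k != k0) (if (k < dl)%N then B else 0) = dl.-1%:R * B.
Proof.
move=> dl_le k0_lt; apply: (addrI B).
have -> : B + dl.-1%:R * B = dl%:R * B.
  by case: (dl) k0_lt => // n _; rewrite -natr1 mulrDl mul1r addrC.
have full : \sum_(k < d) (if (k < dl)%N then B else 0) = dl%:R * B.
  rewrite -(big_mkord xpredT (fun k => if (k < dl)%N then B else 0)).
  rewrite (big_cat_nat (leq0n dl) dl_le) /=.
  rewrite (@eq_big_nat _ _ _ 0 dl _ (fun _ => B)) => [|k /andP[_ ->]] //.
  rewrite (@eq_big_nat _ _ _ dl d _ (fun _ => 0)) => [|k /andP[dl_le_k _]]; last first.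
    by rewrite ltnNge dl_le_k.
  by rewrite big1_eq addr0 sumr_const_nat subn0 mulr_natl.
by rewrite -full [RHS](bigD1 k0) //= k0_lt.
Qed.

Definition amp (d : nat) (m : vec d) (j : nat) : algC := `|vget m j%:Z|.

Section AutocorrEstimate.

Variables (d dl : nat) (d_gt0 : (0 < d)%N) (m : vec d).
Hypotheses (dl_gt0 : (0 < dl)%N) (dl_le : (dl.*2.-1 <= d)%N)
  (m_supp : forall i : 'I_d, (dl <= i)%N -> m i = 0)
  (amp_dom : dl.-1%:R * amp m 1 < amp m 0)
  (amp_step : forall j, (1 <= j)%N -> (j.+1 <= dl.-1)%N -> amp m j.+1 <= amp m j)
  (amp_last : 0 < amp m dl.-1).

Lemma amp_ordmod (j : nat) : amp m j = `|m (ordmod d_gt0 j)|.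
Proof. by rewrite /amp vget_nat. Qed.

Lemma amp_ord (k : 'I_d) : amp m k = `|m k|.
Proof. by rewrite amp_ordmod; congr `|m _|; apply: val_inj; rewrite /= modn_small. Qed.

Lemma amp_addd (j : nat) : amp m (j + d) = amp m j.
Proof. by rewrite !amp_ordmod; congr `|m _|; apply: val_inj; rewrite /= modnDr. Qed.

Lemma amp_out (j : nat) : (dl <= j)%N -> (j < d)%N -> amp m j = 0.
Proof. by move=> dl_le_j j_lt; rewrite amp_ordmod m_supp ?normr0 //= modn_small. Qed.

Lemma amp_noninc (i j : nat) : (i <= j)%N -> (j < d)%N -> amp m j <= amp m i.
Proof.
move=> i_le_j j_lt; have [dl_le_j|j_lt_dl] := leqP dl j.
  by rewrite amp_out ?normr_ge0.
have step (n : nat) : (n.+1 < dl)%N -> amp m n.+1 <= amp m n.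
  case: n => [one_lt_dl|n n_lt]; last by apply: amp_step; lia.
  apply: le_trans (ltW amp_dom); apply: ler_peMl; first exact: normr_ge0.
  by rewrite ler1n; lia.
elim: j i_le_j j_lt j_lt_dl => [|j IH]; first by rewrite leqn0 => /eqP ->.
rewrite leq_eqVlt => /orP [/eqP -> //|i_lt] j_lt j_lt_dl.
by apply: le_trans (IH _ _ _) => //; [apply: step | lia | lia].
Qed.

Lemma amp_pos (i : nat) : (i < dl)%N -> 0 < amp m i.
Proof.
case: i => [_|i i_lt]; last by apply: lt_le_trans amp_last _; apply: amp_noninc; lia.
by apply: le_lt_trans amp_dom; rewrite mulr_ge0 ?ler0n ?normr_ge0.
Qed.

Lemma autocorr_term_norm (P Q : nat) (k : 'I_d) :
  `|m k * (m (ordmod d_gt0 (Q + k)))^* * omega d ^+ (d.-1 * P * ((Q + k) %% d))|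
  = amp m k * amp m (Q + k).
Proof.
have w_norm := unity_norm d_gt0 (prim_expr_order (omega_prim d_gt0)).
by rewrite !normrM norm_conjC normrX w_norm expr1n mulr1 amp_ord amp_ordmod.
Qed.

(* Nonnegative lag r: the term k = 0, of size |a_0 a_r|, dominates the
   dl - 1 other terms of the support, each at most |a_1 a_r|. *)
Lemma autocorr_lag_neq0 (P r : nat) : (r < dl)%N -> autocorr d_gt0 m P r != 0.
Proof.
move=> r_lt; have dl_le_d : (dl <= d)%N by lia.
apply: (@sum_neq0_dominant _ _
  (fun k : 'I_d => if (k < dl)%N then amp m 1 * amp m r else 0) (Ordinal d_gt0)).
  move=> k k_neq0; rewrite autocorr_term_norm.
  have k_ge1 : (1 <= k)%N.
    by rewrite lt0n; apply: contra k_neq0 => /eqP k0; apply/eqP/val_inj.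
  case: ifP => [k_lt|/negbT]; last by rewrite -leqNgt => dl_le_k; rewrite amp_out ?mul0r.
  by apply: ler_pM; rewrite ?normr_ge0 //; apply: amp_noninc; lia.
rewrite autocorr_term_norm sum_below_except //=.
by rewrite addn0 mulrA ltr_pM2r ?amp_pos.
Qed.

(* Negative lag -r: the term k = r, of size |a_r a_0|, dominates; for k < r
   the partner index k - r + d lies in the zero padding [dl, d), and the
   terms with r < k < dl are at most |a_r a_1|. *)
Lemma autocorr_neg_lag_neq0 (P r : nat) : (0 < r < dl)%N ->
  autocorr d_gt0 m P (d - r) != 0.
Proof.
move=> /andP [r_gt0 r_lt]; have r_lt_d : (r < d)%N by lia.
apply: (@sum_neq0_dominant _ _
  (fun k : 'I_d => if (k < dl)%N then amp m r * amp m 1 else 0) (Ordinal r_lt_d)).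
  move=> k k_neq_r; rewrite autocorr_term_norm.
  have kr : (k != r :> nat) by apply: contra k_neq_r => /eqP kr; apply/eqP/val_inj.
  case: ifP => [k_lt|/negbT]; last by rewrite -leqNgt => dl_le_k; rewrite amp_out ?mul0r.
  have [k_lt_r|r_lt_k] := ltnP k r.
    by rewrite [amp m (_ + _)]amp_out ?mulr0 ?mulr_ge0 ?normr_ge0 //; lia.
  rewrite (_ : (d - r + k = (k - r) + d)%N); last by lia.
  by rewrite amp_addd; apply: ler_pM; rewrite ?normr_ge0 //; apply: amp_noninc; lia.
rewrite autocorr_term_norm sum_below_except //=; last by lia.
rewrite (_ : (d - r + r = 0 + d)%N); last by lia.
by rewrite amp_addd mulrCA ltr_pM2l ?amp_pos.
Qed.

Lemma mu2_term_pos (p : int) (k : nat) : (k <= (dl.-1).*2)%N ->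
  0 < mu2_term m p (k%:Z - (dl.-1)%:Z).
Proof.
move=> k_le; rewrite /mu2_term (dft_autocorr d_gt0) normrM normr_nat.
rewrite pmulr_rgt0 ?ltr0n // normr_gt0.
have [dl_le_k|k_lt] := leqP dl.-1 k.
  have -> : zmodn d (k%:Z - (dl.-1)%:Z) = (k - dl.-1)%N.
    by rewrite /zmodn subzn // modz_nat modn_small //; lia.
  by apply: autocorr_lag_neq0; lia.
have -> : zmodn d (k%:Z - (dl.-1)%:Z) = (d - (dl.-1 - k))%N.
  rewrite /zmodn -modzDr (_ : k%:Z - (dl.-1)%:Z + d = (d - (dl.-1 - k))%N); last by lia.
  by rewrite modz_nat modn_small //; lia.
by apply: autocorr_neg_lag_neq0; lia.
Qed.

End AutocorrEstimate.

(* Minima of positive numbers are positive (the order on algC is partial). *)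
Lemma min_gt0 (x y : algC) : 0 < x -> 0 < y -> 0 < Num.min x y.
Proof. by move=> x_gt0 y_gt0; rewrite /Num.min /Order.min; case: ifP. Qed.

Unset Implicit Arguments.

Theorem mainTheorem9 (d delta gamma : nat) (m : vec d) :
  (forall i : 'I_d, (delta <= i)%N -> m i = 0) ->
  (delta.*2.-1 <= d)%N ->
  (1 <= gamma)%N -> (gamma <= delta.*2.-1)%N ->
  `|vget m 0| > (delta.-1)%:R * `|vget m 1| ->
  (forall j : nat, (1 <= j)%N -> (j.+1 <= delta.-1)%N ->
      `|vget m j.+1%:Z| <= `|vget m j%:Z|) ->
  `|vget m (delta.-1)%:Z| > 0 ->
  mu2 delta gamma m > 0.
Proof.
move=> m_supp delta_le gamma_ge1 gamma_le amp_dom amp_step amp_last.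
have delta_gt0 : (0 < delta)%N by lia.
have d_gt0 : (0 < d)%N by lia.
have term_pos (p : int) (k : nat) : (k <= (delta.-1).*2)%N ->
    0 < mu2_term m p (k%:Z - (delta.-1)%:Z).
  exact: (mu2_term_pos d_gt0 delta_gt0 delta_le m_supp amp_dom amp_step amp_last).
have seed : 0 < mu2_term m 0 0.
  by have := @term_pos 0 delta.-1; rewrite subrr; apply; lia.
rewrite /mu2; elim/big_ind: _ => // [x y|p _]; first exact: min_gt0.
rewrite big_seq; elim/big_ind: _ => // [x y|q]; first exact: min_gt0.
by move=> /mapP [k k_in ->]; apply: term_pos; move: k_in; rewrite mem_iota; lia.
Qed.
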